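(* Let $m,n\ge1$ and let $\mu$ be a partition with fewer than $m$ positive parts and $\mu_1<n$. Then the $m\times n$ matrix $M^\mu(m,n)$ is a partial alternating sign matrix whose first row sum is $1$, whose first column sum is $1$, and all of whose other row sums and column sums are $0$.
   Context: A partition $\mu=(\mu_1\ge\mu_2\ge\cdots)$ is a weakly decreasing sequence of nonnegative integers with finitely many nonzero terms. For such $\mu$ with fewer than $m$ positive parts and $\mu_1<n$, the $m\times n$ matrix $M^\mu(m,n)$ has entries: $M^\mu_{1,\mu_1+1}=1$; for each $1\le k\le m-1$ with $\mu_k>\mu_{k+1}$, $M^\mu_{k+1,\mu_{k+1}+1}=1$ and $M^\mu_{k+1,\mu_k+1}=-1$; all other entries are $0$. An $m\times n$ partial alternating sign matrix is an $m\times n$ matrix $M$ with entries in $\{-1,0,1\}$ such that $\sum_{i'=1}^{i}M_{i'j}\in\{0,1\}$ and $\sum_{j'=1}^{j}M_{ij'}\in\{0,1\}$ for all $1\le i\le m$, $1\le j\le n$. *)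

From HB Require Import structures.
From mathcomp Require Import all_boot all_order all_algebra.
Set Implicit Arguments. Unset Strict Implicit. Unset Printing Implicit Defensive.
Import Order.TTheory GRing.Theory Num.Theory.
Local Open Scope ring_scope.

(* A partition mu = (mu_1 >= mu_2 >= ...) is represented by a finite sequence
   [:: mu_1; mu_2; ...; mu_r] of naturals; parts beyond the end are 0.
   Thus mu_k (1-indexed) = part mu (k-1) = nth 0 mu (k-1). *)
Definition part (mu : seq nat) (k : nat) : nat := nth 0%N mu k.

Definition is_partition (mu : seq nat) : Prop := sorted geq mu.

Definition npos_parts (mu : seq nat) : nat := count (fun x => 0 < x)%N mu.

(* Row 0 (paper row 1): a 1 in column mu_1 (paper column mu_1+1).
   Row i >= 1 (paper row k+1 with k = i): if mu_k > mu_{k+1}, a 1 in column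
   mu_{k+1} and a -1 in column mu_k (0-indexed columns). *)
Definition Mmu (mu : seq nat) (m n : nat) : 'M[int]_(m, n) :=
  \matrix_(i < m, j < n)
    if (i == 0%N :> nat) then ((j == part mu 0 :> nat) : int)
    else if (part mu i.-1 > part mu i)%N then
      ((j == part mu i :> nat) : int) - ((j == part mu i.-1 :> nat) : int)
    else 0.

Definition partial_ASM (m n : nat) (M : 'M[int]_(m, n)) : Prop :=
  (forall i j, M i j \in [:: -1; 0; 1]) /\
  (forall (i : 'I_m) (j : 'I_n),
      \sum_(i' < m | (i' <= i)%N) M i' j \in [:: 0; 1]) /\
  (forall (i : 'I_m) (j : 'I_n),
      \sum_(j' < n | (j' <= j)%N) M i j' \in [:: 0; 1]).

From HB Require Import structures.
From mathcomp Require Import all_boot all_order all_algebra.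
Set Implicit Arguments. Unset Strict Implicit. Unset Printing Implicit Defensive.
Import Order.TTheory GRing.Theory Num.Theory.
Local Open Scope ring_scope.

(* Row 0 of M^mu is the
   unit vector e_{mu_0} and row k > 0 is e_{mu_k} - e_{mu_{k-1}}: the guard
   mu_{k-1} > mu_k is immaterial, since equal parts give a zero difference.
   Hence the column prefix sums telescope to e_{mu_i}, while the prefix sums of
   row k > 0 are [mu_k <= j] - [mu_{k-1} <= j], which lie in {0, 1} because mu
   is weakly decreasing. A whole row sums to [k = 0], and a whole column sums to
   the entry of e_{mu_{m-1}} = e_0, as mu has fewer than m positive parts. *)

Lemma part_leq_pred (mu : seq nat) (k : nat) :
  is_partition mu -> (part mu k <= part mu k.-1)%N.
Proof.
move=> /(sortedP 0%N) sorted_mu; case: k => [|k] //.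
case: (ltnP k.+1 (size mu)) => [lt_k|le_k]; first exact: sorted_mu.
by rewrite /part (nth_default 0%N le_k).
Qed.

Lemma part_leq (mu : seq nat) (i j : nat) :
  is_partition mu -> (i <= j)%N -> (part mu j <= part mu i)%N.
Proof.
move=> mu_part; apply: (homo_leq (r := fun x y => y <= x)%N) => [//|y x z|k].
- by move=> le_yx le_zy; apply: leq_trans le_zy le_yx.
- exact: (part_leq_pred k.+1 mu_part).
Qed.

Lemma part_eq0 (mu : seq nat) (k : nat) :
  is_partition mu -> (npos_parts mu <= k)%N -> part mu k = 0%N.
Proof.
move=> mu_part; apply: contraTeq; rewrite -lt0n -ltnNge.
elim: mu k mu_part => [|x s IH] k mu_part; first by rewrite /part nth_nil.
have x_ge : (part (x :: s) k <= x)%N by apply: (part_leq mu_part (leq0n k)).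
case: k x_ge => [|k] x_ge /= part_gt0; first by rewrite part_gt0.
rewrite (leq_trans part_gt0 x_ge) add1n ltnS.
exact: IH (path_sorted mu_part) part_gt0.
Qed.

Lemma sum_indicator (n : nat) (P : pred 'I_n) (a : 'I_n) :
  \sum_(j < n | P j) ((j == a :> nat) : int) = (P a : int).
Proof.
case Pa: (P a); last first.
  by apply: big1 => j Pj; case: eqP => // /val_inj ja; rewrite ja Pa in Pj.
rewrite (bigD1 a) //= eqxx big1 ?addr0 // => j /andP[_].
by rewrite -(inj_eq val_inj) => /negPf ->.
Qed.

Lemma sum_indicator_leq (n a k : nat) : (a < n)%N ->
  \sum_(j < n | (j <= k)%N) ((j == a :> nat) : int) = ((a <= k)%N : int).
Proof. by move=> lt_an; rewrite (sum_indicator _ (Ordinal lt_an)). Qed.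

Lemma big_ord_leq_cond (R : Type) (idx : R) (op : R -> R -> R) (n k : nat)
    (F : 'I_n -> R) : (n <= k.+1)%N ->
  \big[op/idx]_(j < n) F j = \big[op/idx]_(j < n | (j <= k)%N) F j.
Proof. by move=> le_nk; apply: eq_bigl => j; rewrite -ltnS (leq_trans _ le_nk). Qed.

Section PartitionMatrix.

Variables (mu : seq nat) (m n : nat).
Hypotheses (mu_part : is_partition mu) (part0_lt : (part mu 0 < n)%N).

Local Notation M := (Mmu mu m n).

Lemma part_lt (k : nat) : (part mu k < n)%N.
Proof. exact: leq_ltn_trans (part_leq mu_part (leq0n k)) part0_lt. Qed.

Lemma MmuE (i : 'I_m) (j : 'I_n) :
  M i j = ((j == part mu i :> nat) : int)
          - ((i != 0%N :> nat) && (j == part mu i.-1 :> nat) : int).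
Proof.
rewrite mxE; case: eqP => [-> | _] /=; first by rewrite subr0.
case: ltnP => // le_parts.
suff -> : part mu i.-1 = part mu i by rewrite subrr.
by apply/eqP; rewrite eqn_leq le_parts part_leq_pred.
Qed.

Lemma Mmu_col_psum (i : nat) (j : 'I_n) : (i < m)%N ->
  \sum_(k < m | (k <= i)%N) M k j = ((j == part mu i :> nat) : int).
Proof.
move=> lt_im.
pose F k := ((j == part mu k :> nat) : int)
            - ((k != 0%N) && (j == part mu k.-1 :> nat) : int).
rewrite (eq_bigr (fun k : 'I_m => F k)) => [|k _]; last exact: MmuE.
rewrite (eq_bigl (fun k : 'I_m => true && (k < i.+1)%N)) //.
rewrite -(big_ord_widen_cond _ (fun _ => true) F lt_im).
rewrite -(big_mkord (fun _ => true) F).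
elim: i {lt_im} => [|i IH]; first by rewrite big_nat1; apply: subr0.
by rewrite big_nat_recr //= IH addrC; apply: subrK.
Qed.

Lemma Mmu_row_psum (i : 'I_m) (k : nat) :
  \sum_(j < n | (j <= k)%N) M i j
    = ((part mu i <= k)%N : int)
      - ((i != 0%N :> nat) && (part mu i.-1 <= k)%N : int).
Proof.
under eq_bigr do rewrite MmuE.
rewrite sumrB sum_indicator_leq ?part_lt //; congr (_ - _).
case: eqP => _ /=; first by rewrite big1.
exact: sum_indicator_leq (part_lt _).
Qed.

End PartitionMatrix.

Theorem mainTheorem2 (m n : nat) (mu : seq nat) :
  (1 <= m)%N -> (1 <= n)%N ->
  is_partition mu -> (npos_parts mu < m)%N -> (part mu 0 < n)%N ->
  partial_ASM (Mmu mu m n) /\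
  (forall i : 'I_m, \sum_(j < n) Mmu mu m n i j = ((i == 0%N :> nat) : int)) /\
  (forall j : 'I_n, \sum_(i < m) Mmu mu m n i j = ((j == 0%N :> nat) : int)).
Proof.
move=> m_gt0 _ mu_part npos_lt part0_lt.
split; [split; [|split]|split].
- by move=> i j; rewrite MmuE //; case: (_ == _); case: (_ && _).
- by move=> i j; rewrite Mmu_col_psum //; case: (_ == _).
- move=> i j; rewrite Mmu_row_psum //; case: (leqP (part mu i.-1) j) => [le|_].
    by rewrite (leq_trans (part_leq_pred i mu_part) le) andbT; case: eqP.
  by rewrite andbF; case: (_ <= _)%N.
- move=> i; rewrite (big_ord_leq_cond _ _ _ (leqnSn n)) Mmu_row_psum //.
  by rewrite !(ltnW (part_lt mu_part part0_lt _)) andbT; case: eqP.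
- move=> j; rewrite (big_ord_leq_cond _ _ _ (leqSpred m)).
  rewrite Mmu_col_psum ?ltn_predL // part_eq0 //.
  by rewrite -ltnS prednK.
Qed.
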